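(* Let $p_{Z|XY}$ be a randomized function (not necessarily in normal form). (1) If the characteristic bipartite graph of $p_{XY}$ is connected, then every secure protocol $\Pi(p_{XY},p_{Z|XY})$ satisfies $I(X,Y,Z;M_{12})=0$. (2) If $p_{XY}$ has full support and there is no partition $\mathcal X=\mathcal X_1\cup\mathcal X_2$ into disjoint nonempty sets such that the sets $\mathcal Z_k=\{z:\exists x\in\mathcal X_k,y\in\mathcal Y,\ p(z|x,y)>0\}$, $k=1,2$, are disjoint, then every secure protocol $\Pi(p_{XY},p_{Z|XY})$ satisfies $I(X,Y,Z;M_{31})=0$. (3) If $p_{XY}$ has full support and there is no partition $\mathcal Y=\mathcal Y_1\cup\mathcal Y_2$ into disjoint nonempty sets such that the sets $\mathcal Z_k=\{z:\exists x\in\mathcal X,y\in\mathcal Y_k,\ p(z|x,y)>0\}$, $k=1,2$, are disjoint, then every secure protocol $\Pi(p_{XY},p_{Z|XY})$ satisfies $I(X,Y,Z;M_{23})=0$.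
   Context: Setting: $\mathcal X,\mathcal Y,\mathcal Z$ finite sets; Alice (party 1) holds $X\in\mathcal X$, Bob (party 2) holds $Y\in\mathcal Y$, $(X,Y)\sim p_{XY}$; Charlie (party 3) has no input and outputs $Z\in\mathcal Z$; a randomized function is a conditional distribution $p_{Z|XY}$. In a protocol the parties, each with private randomness, exchange messages over multiple rounds on three pairwise private links, each message a codeword of a prefix-free code determined by previous messages on that link; the protocol terminates with probability 1 and may depend on $p_{XY}$. $M_{12},M_{23},M_{31}$ are the final transcripts on the Alice–Bob, Bob–Charlie, Charlie–Alice links. A secure protocol $\Pi(p_{XY},p_{Z|XY})$ satisfies correctness (on inputs $x,y$ Charlie's output has distribution $p_{Z|X=x,Y=y}$) and privacy (Markov chains $(M_{12},M_{31})-X-(Y,Z)$, $(M_{12},M_{23})-Y-(X,Z)$, $(M_{23},M_{31})-Z-(X,Y)$). The characteristic bipartite graph of $p_{XY}$ has vertex set $\mathcal X\cup\mathcal Y$ with $x,y$ adjacent iff $p_{XY}(x,y)>0$. *)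

From HB Require Import structures.
From mathcomp Require Import all_boot all_order all_algebra.
From mathcomp Require Import all_classical all_reals all_analysis.
Set Implicit Arguments. Unset Strict Implicit. Unset Printing Implicit Defensive.
Import Order.TTheory GRing.Theory Num.Theory.
Local Open Scope classical_set_scope.
Local Open Scope ring_scope.

(* Transcripts on a link: finite bit strings (concatenation of the codewords
   exchanged on that link). *)
Definition transcript := seq bool.

Section Defs.
Context {R : realType} {d : measure_display} {Omega : measurableType d}.
Variable P : probability Omega R.

Definition ev {T : Type} (A : Omega -> T) (a : T) : set Omega := A @^-1` [set a].

Definition discrete_rv {T : Type} (A : Omega -> T) : Prop :=
  forall a, measurable (ev A a).

Definition markov_chain {TA TB TC : Type}
  (A : Omega -> TA) (B : Omega -> TB) (C : Omega -> TC) : Prop :=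
  forall a b c,
    (P (ev A a `&` ev B b `&` ev C c) * P (ev B b) =
     P (ev A a `&` ev B b) * P (ev B b `&` ev C c))%E.

(* Mutual information I(A;B) of discrete random variables (in nats):
     I(A;B) = sum_{a,b} p(a,b) ln (p(a,b) / (p(a) p(b)))
   written with the summand  p ln(p/q) - p + q  (p = p(a,b), q = p(a)p(b)),
   which has the same (possibly infinite) sum since the added terms sum to
   1 - 1 = 0, but is termwise nonnegative, so the sum over the countable
   alphabet is always well defined. Convention 0 ln 0 = 0 (ln 0 = 0 and
   x/0 = 0 in MathComp). *)
Definition mi_term {TA TB : Type} (A : Omega -> TA) (B : Omega -> TB)
  (ab : TA * TB) : \bar R :=
  let r := fine (P (ev A ab.1 `&` ev B ab.2)) in
  let q := fine (P (ev A ab.1)) * fine (P (ev B ab.2)) in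
  (r * ln (r / q) - r + q)%:E.

Definition mutual_info {TA TB : choiceType} (A : Omega -> TA) (B : Omega -> TB)
  : \bar R := \esum_(ab in [set: TA * TB]) mi_term A B ab.

End Defs.

Local Close Scope classical_set_scope.
Section Setting.
Context {R : realType} {X Y Z : finType}.

Definition is_pmf2 (pXY : X -> Y -> R) : Prop :=
  (forall x y, 0 <= pXY x y) /\ \sum_(x : X) \sum_(y : Y) pXY x y = 1.

Definition is_cond_pmf (pZ : X -> Y -> Z -> R) : Prop :=
  forall x y, (forall z, 0 <= pZ x y z) /\ \sum_(z : Z) pZ x y z = 1.

Definition full_support (pXY : X -> Y -> R) : Prop := forall x y, 0 < pXY x y.

Definition char_graph (pXY : X -> Y -> R) : rel (X + Y) :=
  fun u v => match u, v with
             | inl x, inr y => 0 < pXY x y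
             | inr y, inl x => 0 < pXY x y
             | _, _ => false
             end.

Definition char_graph_connected (pXY : X -> Y -> R) : Prop :=
  forall u v : X + Y, connect (char_graph pXY) u v.

Definition Zset_of_X (pZ : X -> Y -> Z -> R) (Xk : {set X}) : {set Z} :=
  [set z | [exists x in Xk, exists y : Y, 0 < pZ x y z]].
Definition Zset_of_Y (pZ : X -> Y -> Z -> R) (Yk : {set Y}) : {set Z} :=
  [set z | [exists x : X, exists y in Yk, 0 < pZ x y z]].

Definition X_partition_exists (pZ : X -> Y -> Z -> R) : Prop :=
  exists X1 X2 : {set X}, [/\ X1 :|: X2 = finset.setT, [disjoint X1 & X2],
    X1 != finset.set0, X2 != finset.set0 & [disjoint Zset_of_X pZ X1 & Zset_of_X pZ X2]].
Definition Y_partition_exists (pZ : X -> Y -> Z -> R) : Prop :=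
  exists Y1 Y2 : {set Y}, [/\ Y1 :|: Y2 = finset.setT, [disjoint Y1 & Y2],
    Y1 != finset.set0, Y2 != finset.set0 & [disjoint Zset_of_Y pZ Y1 & Zset_of_Y pZ Y2]].

Local Open Scope classical_set_scope.
(* The joint behaviour of a secure protocol Pi(p_XY, p_Z|XY): on a
   probability space, inputs Xv, Yv, Charlie's output Zv and the final
   transcripts M12, M23, M31 such that (X,Y) ~ p_XY, correctness and
   privacy hold. *)
Definition secure_execution {d : measure_display} {Omega : measurableType d}
  (P : probability Omega R) (pXY : X -> Y -> R) (pZ : X -> Y -> Z -> R)
  (Xv : Omega -> X) (Yv : Omega -> Y) (Zv : Omega -> Z)
  (M12 M23 M31 : Omega -> transcript) : Prop :=
  [/\ [/\ discrete_rv Xv, discrete_rv Yv & discrete_rv Zv],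
      [/\ discrete_rv M12, discrete_rv M23 & discrete_rv M31],
      (forall x y, P (ev Xv x `&` ev Yv y) = (pXY x y)%:E),
      (forall x y z, P (ev Xv x `&` ev Yv y `&` ev Zv z) = (pXY x y * pZ x y z)%:E) &
      (* privacy against Alice, Bob, Charlie *)
      [/\ markov_chain P (fun w => (M12 w, M31 w)) Xv (fun w => (Yv w, Zv w)),
          markov_chain P (fun w => (M12 w, M23 w)) Yv (fun w => (Xv w, Zv w)) &
          markov_chain P (fun w => (M23 w, M31 w)) Zv (fun w => (Xv w, Yv w))]].

End Setting.

From HB Require Import structures.
From mathcomp Require Import all_boot all_order all_algebra.
From mathcomp Require Import all_classical all_reals all_analysis.
Import Order.TTheory GRing.Theory Num.Theory.
Local Open Scope classical_set_scope.
Local Open Scope ring_scope.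

(* Fix a transcript value m and, for a party holding U, let c_U(u) be
   P(M = m | U = u).  Privacy against that party is the Markov chain
   M - U - (X, Y, Z), so on every triple (x, y, z) of positive probability
   P(M = m | x, y, z) = c_U(u).  When the privacy of both endpoints of the
   link applies, the two ratio functions therefore agree on every pair of
   inputs/outputs that occurs with positive probability.  Connectivity of
   the characteristic graph (part 1), resp. the absence of a separating
   partition (parts 2 and 3), propagates this along all of X (resp. Y), so
   c_X (resp. c_Y) is constant.  A constant conditional probability and the
   Markov chain make {M = m} independent of (X, Y, Z), hence the mutual
   information vanishes. *)

Section DiscreteProbability.
Context {R : realType} {d : measure_display} {Omega : measurableType d}.
Variable P : probability Omega R.

Lemma ev_pair {TA TB : Type} (A : Omega -> TA) (B : Omega -> TB) a b :
  ev (fun w => (A w, B w)) (a, b) = ev A a `&` ev B b.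
Proof. by apply/seteqP; split => w; rewrite /ev /preimage /=; case=> -> ->. Qed.

Lemma discrete_pair {TA TB : Type} (A : Omega -> TA) (B : Omega -> TB) :
  discrete_rv A -> discrete_rv B -> discrete_rv (fun w => (A w, B w)).
Proof. by move=> dA dB [a b]; rewrite ev_pair; exact: measurableI. Qed.

Definition pr (E : set Omega) : R := fine (P E).

Definition cprob (W E : set Omega) : R := pr (W `&` E) / pr E.

Lemma prE E : measurable E -> P E = (pr E)%:E.
Proof. by move=> mE; rewrite fineK // fin_num_measure. Qed.

Lemma pr_ge0 E : 0 <= pr E.
Proof. exact: fine_ge0. Qed.

Lemma pr_le E F : measurable E -> measurable F -> E `<=` F -> pr E <= pr F.
Proof.
move=> mE mF EF; apply: fine_le; rewrite ?fin_num_measure //.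
by apply: le_measure => //; rewrite inE.
Qed.

Lemma pr_eq0_sub E F :
  measurable E -> measurable F -> E `<=` F -> pr F = 0 -> pr E = 0.
Proof. by move=> mE mF EF F0; apply/le_anti; rewrite pr_ge0 -F0 pr_le. Qed.

(* Indexing the values of V by their codes turns the law of total probability
   into [measure_bigcup] over [nat]. *)
Definition ev_code {T : countType} (V : Omega -> T) (n : nat) : set Omega :=
  [set w | pickle (V w) = n].

Lemma ev_codeE {T : countType} (V : Omega -> T) n :
  ev_code V n = if pickle_inv n is Some v then ev V v else set0.
Proof.
case En: (pickle_inv n) => [v|]; apply/seteqP; split => w //=; rewrite /ev_code /=.
- by move=> Vw; move: En; rewrite -Vw pickleK_inv; case.
- by rewrite /ev /preimage /= => ->; have := @pickle_invK T n; rewrite En.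
- by move=> Vw; move: En; rewrite -Vw pickleK_inv.
Qed.

Lemma measurable_ev_code {T : countType} (V : Omega -> T) n :
  discrete_rv V -> measurable (ev_code V n).
Proof. by move=> dV; rewrite ev_codeE; case: pickle_inv. Qed.

Lemma measure_sum_ev_code {T : countType} (V : Omega -> T) E :
  discrete_rv V -> measurable E ->
  P E = (\sum_(n <oo) P (E `&` ev_code V n))%E.
Proof.
move=> dV mE.
have EV : E = \bigcup_(n in setT) (E `&` ev_code V n).
  by apply/seteqP; split => [w Ew|w [n _ []//]]; exists (pickle (V w)).
rewrite {1}EV measure_bigcup //.
- by apply: eq_eseriesl => n; rewrite in_setT.
- by move=> n _; apply: measurableI => //; exact: measurable_ev_code.
- by move=> i j _ _ [w [[_ <-] [_ <-]]].
Qed.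

Lemma pr_eq_of_setI_ev {T : countType} (V : Omega -> T) W c :
  discrete_rv V -> measurable W ->
  (forall v, pr (W `&` ev V v) = c * pr (ev V v)) -> pr W = c.
Proof.
move=> dV mW hW; rewrite /pr (measure_sum_ev_code _ _ dV mW).
transitivity (fine (c%:E * \sum_(n <oo) P (setT `&` ev_code V n)))%E; last first.
  by rewrite -measure_sum_ev_code // probability_setT mule1.
congr fine; rewrite -nneseriesZl //; apply: eq_eseriesr => n _.
rewrite setTI ev_codeE; case: pickle_inv => [v|]; last by rewrite setI0 measure0 mule0.
rewrite prE; last exact: measurableI.
by rewrite hW EFinM -prE.
Qed.

Lemma markov_chain_pr {TA TB TC : Type}
  (A : Omega -> TA) (B : Omega -> TB) (C : Omega -> TC) :
  discrete_rv A -> discrete_rv B -> discrete_rv C -> markov_chain P A B C ->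
  forall a b c, pr (ev A a `&` ev B b `&` ev C c) * pr (ev B b) =
    pr (ev A a `&` ev B b) * pr (ev B b `&` ev C c).
Proof.
move=> dA dB dC ABC a b c; have := ABC a b c.
have mAB := measurableI _ _ (dA a) (dB b); have mBC := measurableI _ _ (dB b) (dC c).
rewrite (prE _ (measurableI _ _ mAB (dC c))) (prE _ (dB b)) (prE _ mAB) (prE _ mBC).
by rewrite -!EFinM => -[].
Qed.

Lemma markov_chain_marginal {TA TB TC : Type} {T : countType}
  (A : Omega -> TA) (A' : Omega -> T) (B : Omega -> TB) (C : Omega -> TC) :
  discrete_rv A -> discrete_rv A' -> discrete_rv B -> discrete_rv C ->
  (forall a a' b c,
     (P (ev A a `&` ev B b `&` ev C c `&` ev A' a') * P (ev B b) =
      P (ev A a `&` ev B b `&` ev A' a') * P (ev B b `&` ev C c))%E) ->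
  markov_chain P A B C.
Proof.
move=> dA dA' dB dC H a b c.
have mB := dB b; have mAB := measurableI _ _ (dA a) mB.
have mBC := measurableI _ _ mB (dC c).
rewrite (measure_sum_ev_code _ _ dA' (measurableI _ _ mAB (dC c))).
rewrite (measure_sum_ev_code _ _ dA' mAB).
rewrite (prE _ mB) (prE _ mBC) muleC [RHS]muleC -!nneseriesZl //.
apply: eq_eseriesr => n _; rewrite ev_codeE; case: pickle_inv => [a'|].
  by rewrite -(prE _ mB) -(prE _ mBC) muleC [RHS]muleC; exact: H.
by rewrite !setI0 measure0 !mule0.
Qed.

Lemma markov_chain_fst {TA TB TC : Type} {T : countType}
  (A : Omega -> TA) (A' : Omega -> T) (B : Omega -> TB) (C : Omega -> TC) :
  discrete_rv A -> discrete_rv A' -> discrete_rv B -> discrete_rv C ->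
  markov_chain P (fun w => (A w, A' w)) B C -> markov_chain P A B C.
Proof.
move=> dA dA' dB dC AA'BC; apply: markov_chain_marginal dA dA' dB dC _ => a a' b c.
by have := AA'BC (a, a') b c; rewrite !ev_pair !(setIAC _ (ev A' a')).
Qed.

Lemma markov_chain_snd {TA TB TC : Type} {T : countType}
  (A : Omega -> TA) (A' : Omega -> T) (B : Omega -> TB) (C : Omega -> TC) :
  discrete_rv A -> discrete_rv A' -> discrete_rv B -> discrete_rv C ->
  markov_chain P (fun w => (A' w, A w)) B C -> markov_chain P A B C.
Proof.
move=> dA dA' dB dC A'ABC; apply: markov_chain_marginal dA dA' dB dC _ => a a' b c.
have := A'ABC (a', a) b c.
by rewrite !ev_pair [ev A' a' `&` ev A a]setIC !(setIAC _ (ev A' a')).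
Qed.

Lemma cprob_markov {TM TU TV : Type}
  (M : Omega -> TM) (U : Omega -> TU) (V : Omega -> TV) m u v :
  discrete_rv M -> discrete_rv U -> discrete_rv V -> markov_chain P M U V ->
  0 < pr (ev U u `&` ev V v) ->
  cprob (ev M m) (ev U u `&` ev V v) = cprob (ev M m) (ev U u).
Proof.
move=> dM dU dV MUV UV0.
have U0 : 0 < pr (ev U u).
  apply: (lt_le_trans UV0); apply: pr_le;
    by [exact: measurableI | exact: dU | exact: subIsetl].
apply/eqP; rewrite eqr_div ?lt0r_neq0 // setIA.
by apply/eqP; exact: markov_chain_pr.
Qed.

Lemma markov_indep_of_cprob_const {TM TV : Type} {TU : countType}
  (M : Omega -> TM) (U : Omega -> TU) (V : Omega -> TV) m :
  discrete_rv M -> discrete_rv U -> discrete_rv V -> markov_chain P M U V ->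
  (forall u u', pr (ev U u) != 0 -> pr (ev U u') != 0 ->
     cprob (ev M m) (ev U u) = cprob (ev M m) (ev U u')) ->
  forall u v,
    pr (ev M m `&` (ev U u `&` ev V v)) = pr (ev M m) * pr (ev U u `&` ev V v).
Proof.
move=> dM dU dV MUV hc u v.
have mMU u' : measurable (ev M m `&` ev U u') by exact: measurableI.
have mUV : measurable (ev U u `&` ev V v) by exact: measurableI.
have [U0|U0] := eqVneq (pr (ev U u)) 0.
  have UV0 : pr (ev U u `&` ev V v) = 0 by apply: pr_eq0_sub U0 => //; exact: subIsetl.
  rewrite UV0 mulr0; apply: pr_eq0_sub UV0 => //;
    by [exact: measurableI | exact: subIsetr].
set c := cprob (ev M m) (ev U u).
have scale u' : pr (ev M m `&` ev U u') = c * pr (ev U u').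
  have [U'0|U'0] := eqVneq (pr (ev U u')) 0.
    by rewrite U'0 mulr0; apply: pr_eq0_sub U'0 => //; exact: subIsetr.
  by rewrite /c (hc _ _ U0 U'0) /cprob divfK.
have -> : pr (ev M m) = c by apply: pr_eq_of_setI_ev scale.
apply: (mulIf U0); rewrite setIA markov_chain_pr // scale.
by rewrite mulrAC.
Qed.

Lemma mutual_info_eq0 {TA TB : choiceType} (A : Omega -> TA) (B : Omega -> TB) :
  (forall a b, pr (ev A a `&` ev B b) = pr (ev A a) * pr (ev B b)) ->
  mutual_info P A B = 0%E.
Proof.
move=> AB; rewrite /mutual_info esum1 // => -[a b] _; rewrite /mi_term /=.
rewrite -!/(pr _) AB; set q := pr (ev A a) * pr (ev B b).
have [->|q0] := eqVneq q 0; first by rewrite !mul0r subrr addr0.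
by rewrite divff // ln1 mulr0 sub0r addNr.
Qed.

Lemma mutual_info_eq0_of_markov_cprob_const {TA TM : choiceType} {TU : countType}
  {TV : Type} (A : Omega -> TA) (M : Omega -> TM) (U : Omega -> TU)
  (V : Omega -> TV) :
  discrete_rv M -> discrete_rv U -> discrete_rv V -> markov_chain P M U V ->
  (forall a, exists u v, ev A a = ev U u `&` ev V v) ->
  (forall m u u', pr (ev U u) != 0 -> pr (ev U u') != 0 ->
     cprob (ev M m) (ev U u) = cprob (ev M m) (ev U u')) ->
  mutual_info P A M = 0%E.
Proof.
move=> dM dU dV MUV AUV hc; apply: mutual_info_eq0 => a m.
have [u [v ->]] := AUV a.
by rewrite setIC (markov_indep_of_cprob_const _ _ _ _ dM dU dV MUV (hc m)) mulrC.
Qed.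

End DiscreteProbability.

Lemma connect_fun_eq {T : finType} {U : eqType} (e : rel T) (g : T -> U) :
  (forall u v, e u v -> g u = g v) -> forall u v, connect e u v -> g u = g v.
Proof.
move=> eg u v; have cl : fingraph.closed e [pred w | g w == g u].
  by move=> a b /eg ga; rewrite !inE ga.
by move/(closed_connect cl); rewrite !inE eqxx => /esym/eqP.
Qed.

Section PartitionsOfZ.
Context {R : realType} {X Y Z : finType}.

Lemma cond_pmf_exists_pos (pZ : X -> Y -> Z -> R) :
  is_cond_pmf pZ -> forall x y, exists z, 0 < pZ x y z.
Proof.
move=> hpZ x y; have [pZ_ge0 pZ_sum1] := hpZ x y.
case: (pickP (fun z => 0 < pZ x y z)) => [z pz|pZ0]; first by exists z.
move: pZ_sum1; rewrite big1 => [/eqP|z _]; first by rewrite eq_sym oner_eq0.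
by apply/eqP; rewrite eq_le pZ_ge0 andbT leNgt pZ0.
Qed.

Lemma const_of_no_X_partition (pZ : X -> Y -> Z -> R) {T : eqType}
  (g : X -> T) (h : Z -> T) :
  ~ X_partition_exists pZ -> (forall x y z, 0 < pZ x y z -> g x = h z) ->
  forall x x', g x = g x'.
Proof.
move=> noPart gh x x'; apply/eqP/negPn/negP => gxx'; apply: noPart.
exists [set u | g u == g x]%SET, [set u | g u != g x]%SET; split.
- by apply/setP => u; rewrite !inE orbN.
- by rewrite disjoint_subset; apply/fintype.subsetP => u; rewrite !inE negbK.
- by apply/set0Pn; exists x; rewrite inE eqxx.
- by apply/set0Pn; exists x'; rewrite inE eq_sym.
- rewrite disjoint_subset; apply/fintype.subsetP => z; rewrite !inE.
  case/existsP => x1 /andP [+ /existsP [y1 /gh h1]]; rewrite inE h1 => /eqP hz.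
  apply/negP => /existsP [x2 /andP [+ /existsP [y2 /gh h2]]].
  by rewrite inE h2 hz eqxx.
Qed.

Lemma X_partition_exists_swap (pZ : X -> Y -> Z -> R) :
  X_partition_exists (fun y x z => pZ x y z) -> Y_partition_exists pZ.
Proof.
case=> Y1 [Y2 [Ycover Ydisj Y1n0 Y2n0 Zdisj]]; exists Y1, Y2; split => //.
suff ZX_ZY Yk : Zset_of_X (fun y x z => pZ x y z) Yk = Zset_of_Y pZ Yk.
  by rewrite -!ZX_ZY.
apply/setP => z; rewrite !inE; apply/existsP/existsP.
- by case=> y /andP [yk /existsP [x pz]]; exists x; apply/existsP; exists y; rewrite yk.
- by case=> x /existsP [y /andP [yk pz]]; exists y; rewrite yk; apply/existsP; exists x.
Qed.

End PartitionsOfZ.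

Lemma const_of_no_Y_partition {R : realType} {X Y Z : finType}
  (pZ : X -> Y -> Z -> R) {T : eqType} (g : Y -> T) (h : Z -> T) :
  ~ Y_partition_exists pZ -> (forall x y z, 0 < pZ x y z -> g y = h z) ->
  forall y y', g y = g y'.
Proof.
move=> noPart gh; apply: (const_of_no_X_partition (fun y x z => pZ x y z) g h).
  by move/X_partition_exists_swap.
by move=> y x z /gh.
Qed.

Section SecureProtocol.
Context {R : realType} {X Y Z : finType} (pXY : X -> Y -> R) (pZ : X -> Y -> Z -> R).
Context {d : measure_display} {Omega : measurableType d} (P : probability Omega R).
Variables (Xv : Omega -> X) (Yv : Omega -> Y) (Zv : Omega -> Z).
Variable M : Omega -> transcript.
Hypotheses (dX : discrete_rv Xv) (dY : discrete_rv Yv) (dZ : discrete_rv Zv)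
  (dM : discrete_rv M).
Hypothesis correct : forall x y z,
  P (ev Xv x `&` ev Yv y `&` ev Zv z) = (pXY x y * pZ x y z)%:E.

Local Notation XYZ := (fun w => (Xv w, Yv w, Zv w)).

Lemma ev_XYZ x y z : ev XYZ (x, y, z) = ev Xv x `&` ev Yv y `&` ev Zv z.
Proof. by rewrite (ev_pair (fun w => (Xv w, Yv w))) ev_pair. Qed.

Lemma ev_XYZ_X x y z :
  ev XYZ (x, y, z) = ev Xv x `&` ev (fun w => (Yv w, Zv w)) (y, z).
Proof. by rewrite ev_XYZ ev_pair setIA. Qed.

Lemma ev_XYZ_Y x y z :
  ev XYZ (x, y, z) = ev Yv y `&` ev (fun w => (Xv w, Zv w)) (x, z).
Proof. by rewrite ev_XYZ ev_pair setIAC setIC. Qed.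

Lemma ev_XYZ_Z x y z :
  ev XYZ (x, y, z) = ev Zv z `&` ev (fun w => (Xv w, Yv w)) (x, y).
Proof. by rewrite ev_XYZ ev_pair setIC. Qed.

Lemma pr_XYZ_gt0 x y z :
  0 < pXY x y -> 0 < pZ x y z -> 0 < pr P (ev XYZ (x, y, z)).
Proof. by move=> pxy pz; rewrite /pr ev_XYZ correct mulr_gt0. Qed.

Section Message.
Variable m : transcript.
Local Notation cpr E := (cprob P (ev M m) E).

Lemma cprob_XYZ_X x y z :
  markov_chain P M Xv (fun w => (Yv w, Zv w)) ->
  0 < pr P (ev XYZ (x, y, z)) -> cpr (ev XYZ (x, y, z)) = cpr (ev Xv x).
Proof.
by rewrite ev_XYZ_X => MX; apply: cprob_markov => //; exact: discrete_pair.
Qed.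

Lemma cprob_XYZ_Y x y z :
  markov_chain P M Yv (fun w => (Xv w, Zv w)) ->
  0 < pr P (ev XYZ (x, y, z)) -> cpr (ev XYZ (x, y, z)) = cpr (ev Yv y).
Proof.
by rewrite ev_XYZ_Y => MY; apply: cprob_markov => //; exact: discrete_pair.
Qed.

Lemma cprob_XYZ_Z x y z :
  markov_chain P M Zv (fun w => (Xv w, Yv w)) ->
  0 < pr P (ev XYZ (x, y, z)) -> cpr (ev XYZ (x, y, z)) = cpr (ev Zv z).
Proof.
by rewrite ev_XYZ_Z => MZ; apply: cprob_markov => //; exact: discrete_pair.
Qed.

End Message.

Lemma mutual_info_XYZ_eq0_of_connected :
  is_cond_pmf pZ -> char_graph_connected pXY ->
  markov_chain P M Xv (fun w => (Yv w, Zv w)) ->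
  markov_chain P M Yv (fun w => (Xv w, Zv w)) ->
  mutual_info P XYZ M = 0%E.
Proof.
move=> hpZ conn MX MY.
apply: (mutual_info_eq0_of_markov_cprob_const _ _ _ _ _ dM dX
  (discrete_pair _ _ dY dZ) MX) => [[[x y] z]|m x x' _ _].
  by exists x, (y, z); rewrite ev_XYZ_X.
pose g (u : X + Y) := match u with
  | inl x => cprob P (ev M m) (ev Xv x)
  | inr y => cprob P (ev M m) (ev Yv y) end.
have edge x1 y1 : 0 < pXY x1 y1 -> g (inl x1) = g (inr y1).
  move=> pxy; have [z pz] := cond_pmf_exists_pos _ hpZ x1 y1.
  have pos := pr_XYZ_gt0 _ _ _ pxy pz.
  by rewrite /= -(cprob_XYZ_X _ _ _ _ MX pos) (cprob_XYZ_Y _ _ _ _ MY pos).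
apply: (connect_fun_eq _ g _ _ _ (conn (inl x) (inl x'))).
by move=> [u|u] [v|v] //= /edge // /esym.
Qed.

Lemma mutual_info_XYZ_eq0_of_no_X_partition :
  full_support pXY -> ~ X_partition_exists pZ ->
  markov_chain P M Xv (fun w => (Yv w, Zv w)) ->
  markov_chain P M Zv (fun w => (Xv w, Yv w)) ->
  mutual_info P XYZ M = 0%E.
Proof.
move=> full noPart MX MZ.
apply: (mutual_info_eq0_of_markov_cprob_const _ _ _ _ _ dM dX
  (discrete_pair _ _ dY dZ) MX) => [[[x y] z]|m x x' _ _].
  by exists x, (y, z); rewrite ev_XYZ_X.
apply: (const_of_no_X_partition _ (fun x => cprob P (ev M m) (ev Xv x))
  (fun z => cprob P (ev M m) (ev Zv z)) noPart).
move=> {}x y z pz; have pos := pr_XYZ_gt0 _ _ _ (full x y) pz.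
by rewrite -(cprob_XYZ_X _ _ _ _ MX pos) (cprob_XYZ_Z _ _ _ _ MZ pos).
Qed.

Lemma mutual_info_XYZ_eq0_of_no_Y_partition :
  full_support pXY -> ~ Y_partition_exists pZ ->
  markov_chain P M Yv (fun w => (Xv w, Zv w)) ->
  markov_chain P M Zv (fun w => (Xv w, Yv w)) ->
  mutual_info P XYZ M = 0%E.
Proof.
move=> full noPart MY MZ.
apply: (mutual_info_eq0_of_markov_cprob_const _ _ _ _ _ dM dY
  (discrete_pair _ _ dX dZ) MY) => [[[x y] z]|m y y' _ _].
  by exists y, (x, z); rewrite ev_XYZ_Y.
apply: (const_of_no_Y_partition _ (fun y => cprob P (ev M m) (ev Yv y))
  (fun z => cprob P (ev M m) (ev Zv z)) noPart).
move=> x {}y z pz; have pos := pr_XYZ_gt0 _ _ _ (full x y) pz.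
by rewrite -(cprob_XYZ_Y _ _ _ _ MY pos) (cprob_XYZ_Z _ _ _ _ MZ pos).
Qed.

End SecureProtocol.

Theorem lemma3 (R : realType) (X Y Z : finType)
  (pXY : X -> Y -> R) (pZ : X -> Y -> Z -> R) :
  is_pmf2 pXY -> is_cond_pmf pZ ->
  [/\
   (char_graph_connected pXY ->
    forall (d : measure_display) (Omega : measurableType d) (P : probability Omega R)
      (Xv : Omega -> X) (Yv : Omega -> Y) (Zv : Omega -> Z)
      (M12 M23 M31 : Omega -> transcript),
      secure_execution P pXY pZ Xv Yv Zv M12 M23 M31 ->
      mutual_info P (fun w => (Xv w, Yv w, Zv w)) M12 = 0%E),
   (full_support pXY -> ~ X_partition_exists pZ ->
    forall (d : measure_display) (Omega : measurableType d) (P : probability Omega R)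
      (Xv : Omega -> X) (Yv : Omega -> Y) (Zv : Omega -> Z)
      (M12 M23 M31 : Omega -> transcript),
      secure_execution P pXY pZ Xv Yv Zv M12 M23 M31 ->
      mutual_info P (fun w => (Xv w, Yv w, Zv w)) M31 = 0%E) &
   (full_support pXY -> ~ Y_partition_exists pZ ->
    forall (d : measure_display) (Omega : measurableType d) (P : probability Omega R)
      (Xv : Omega -> X) (Yv : Omega -> Y) (Zv : Omega -> Z)
      (M12 M23 M31 : Omega -> transcript),
      secure_execution P pXY pZ Xv Yv Zv M12 M23 M31 ->
      mutual_info P (fun w => (Xv w, Yv w, Zv w)) M23 = 0%E)].
Proof.
move=> _ hpZ; split=> [conn|full noPart|full noPart] d Omega P Xv Yv Zv M12 M23 M31
  [[dX dY dZ] [d12 d23 d31] _ correct [privA privB privC]].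
- apply: (mutual_info_XYZ_eq0_of_connected _ _ _ _ _ _ _ dX dY dZ d12 correct hpZ conn).
  + exact: markov_chain_fst d12 d31 dX (discrete_pair _ _ dY dZ) privA.
  + exact: markov_chain_fst d12 d23 dY (discrete_pair _ _ dX dZ) privB.
- apply: (mutual_info_XYZ_eq0_of_no_X_partition _ _ _ _ _ _ _ dX dY dZ d31 correct
    full noPart).
  + exact: markov_chain_snd d31 d12 dX (discrete_pair _ _ dY dZ) privA.
  + exact: markov_chain_snd d31 d23 dZ (discrete_pair _ _ dX dY) privC.
- apply: (mutual_info_XYZ_eq0_of_no_Y_partition _ _ _ _ _ _ _ dX dY dZ d23 correct
    full noPart).
  + exact: markov_chain_snd d23 d12 dY (discrete_pair _ _ dX dZ) privB.
  + exact: markov_chain_fst d23 d31 dZ (discrete_pair _ _ dX dY) privC.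
Qed.
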